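(* Let $\{E_\alpha\}_{\alpha\in\mathbb I}$ be a long directed family of Banach spaces over $\mathbb K\in\{\mathbb R,\mathbb C\}$ whose bonding maps (inclusions $E_\alpha\to E_\beta$, $\alpha\leq\beta$) are linear isometries. Then: (a) $\{E_\alpha\}_{\alpha\in\mathbb I}$ satisfies ACP; (b) $E=\bigcup_\alpha E_\alpha$ with the colimit space topology $\mathscr T$ is a Banach space; and (c) $(E,\mathscr T)$ is the colimit of $\{E_\alpha\}_{\alpha\in\mathbb I}$ in the category $\mathsf{TVS}_{\mathbb K}$ of topological vector spaces over $\mathbb K$ and continuous linear maps, and in its full subcategory $\mathsf{LCTVS}_{\mathbb K}$ of locally convex spaces.
   Context: Long means every countable subset of $\mathbb I$ has an upper bound. The colimit space topology is $\mathscr T=\{U\subseteq E\mid U\cap E_\alpha\text{ open in }E_\alpha\ \forall\alpha\}$. ACP (for the underlying additive topological groups) means $\mathscr T$ coincides with the finest group topology on $E$ making all inclusions continuous. *)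

From HB Require Import structures.
From mathcomp Require Import all_boot all_order all_algebra.
From mathcomp Require Import all_classical all_reals all_analysis.
From mathcomp Require Export complex.
Set Implicit Arguments. Unset Strict Implicit. Unset Printing Implicit Defensive.
Import Order.TTheory GRing.Theory Num.Theory.
Local Open Scope classical_set_scope.
Local Open Scope ring_scope.

Definition directed_preorder (I : Type) (le : I -> I -> Prop) : Prop :=
  (forall a, le a a) /\ (forall a b c, le a b -> le b c -> le a c) /\
  (forall a b, exists c, le a c /\ le b c).

Definition long_index (I : Type) (le : I -> I -> Prop) : Prop :=
  forall A : set I, countable A -> exists b, forall a, A a -> le a b.

Section Topologies.
Variable K : numFieldType.
Variable V : lmodType K.

Definition is_topology (tau : set (set V)) : Prop :=
  tau set0 /\ tau setT /\
  (forall U W, tau U -> tau W -> tau (U `&` W)) /\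
  (forall F : set (set V), F `<=` tau -> tau (\bigcup_(U in F) U)).

Definition add_continuous (tau : set (set V)) : Prop :=
  forall U x y, tau U -> U (x + y) ->
    exists P W, [/\ tau P, tau W, P x, W y &
                 forall a b, P a -> W b -> U (a + b)].

Definition opp_continuous (tau : set (set V)) : Prop :=
  forall U, tau U -> tau [set x | U (- x)].

Definition scale_continuous (tau : set (set V)) : Prop :=
  forall U (k : K) x, tau U -> U (k *: x) ->
    exists e : K, 0 < e /\ exists P, [/\ tau P, P x &
      forall (k' : K) y, `|k' - k| < e -> P y -> U (k' *: y)].

(* Hausdorffness is not required (the usual convention, also that of
   mathcomp-analysis' topologicalLmodType) *)
Definition group_topology (tau : set (set V)) : Prop :=
  is_topology tau /\ add_continuous tau /\ opp_continuous tau.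

Definition tvs_topology (tau : set (set V)) : Prop :=
  is_topology tau /\ add_continuous tau /\ scale_continuous tau.

Definition convex_subset (C : set V) : Prop :=
  forall x y (t : K), C x -> C y -> 0 <= t <= 1 -> C (t *: x + (1 - t) *: y).

Definition locally_convex_topology (tau : set (set V)) : Prop :=
  forall U x, tau U -> U x ->
    exists C, [/\ tau C, C x, C `<=` U & convex_subset C].

Definition is_norm (nrm : V -> K) : Prop :=
  [/\ forall x, 0 <= nrm x,
      forall x, nrm x = 0 -> x = 0,
      forall (k : K) x, nrm (k *: x) = `|k| * nrm x &
      forall x y, nrm (x + y) <= nrm x + nrm y].

Definition norm_complete (nrm : V -> K) : Prop :=
  forall u : nat -> V,
    (forall e : K, 0 < e -> exists N, forall m n, (N <= m)%N -> (N <= n)%N ->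
        nrm (u m - u n) < e) ->
    exists l, forall e : K, 0 < e -> exists N, forall n, (N <= n)%N ->
        nrm (u n - l) < e.

Definition norm_topology (nrm : V -> K) : set (set V) :=
  [set U | forall x, U x -> exists2 e : K, 0 < e &
     forall y, nrm (y - x) < e -> U y].

Definition banach_topology (tau : set (set V)) : Prop :=
  exists nrm : V -> K, [/\ is_norm nrm, norm_complete nrm &
                          norm_topology nrm = tau].

Definition is_linear_map (F : lmodType K) (g : V -> F) : Prop :=
  forall (k : K) x y, g (k *: x + y) = k *: g x + g y.

End Topologies.

(* Each E_a is a Banach space; iota a : E_a -> V is the (injective, linear)
   inclusion onto the subset E_a of the union V. *)
Section Family.
Variable K : numFieldType.
Variable I : Type.
Variable le : I -> I -> Prop.
Variable E : I -> completeNormedModType K.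
Variable V : lmodType K.
Variable iota : forall a, {linear E a -> V}.

(* E_a is contained in E_b for a <= b, and the inclusion (bonding map) is an
   isometry; linearity of the bonding maps is automatic since iota is linear
   and injective. *)
Definition isometric_bonding : Prop :=
  (forall a, injective (iota a)) /\
  (forall a b, le a b -> forall x : E a, exists y : E b, iota b y = iota a x) /\
  (forall a b, le a b -> forall (x : E a) (y : E b),
      iota a x = iota b y -> `|x| = `|y|).

Definition union_covers : Prop := forall v : V, exists a (x : E a), iota a x = v.

Definition colim_topology : set (set V) :=
  [set U | forall a, open (iota a @^-1` U)].

Definition inclusions_continuous (tau : set (set V)) : Prop :=
  forall a U, tau U -> open (iota a @^-1` U).

Definition ACP : Prop :=
  [/\ group_topology colim_topology,
      inclusions_continuous colim_topology &
      forall sigma : set (set V), group_topology sigma ->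
        inclusions_continuous sigma -> sigma `<=` colim_topology].

Definition compatible_family (F : Type) (f : forall a, E a -> F) : Prop :=
  forall a b (x : E a) (y : E b), le a b -> iota a x = iota b y -> f a x = f b y.

Definition continuous_from (tau : set (set V)) (F : topologicalType)
    (g : V -> F) : Prop :=
  forall W : set F, open W -> tau (g @^-1` W).

Definition colimit_in_TVS : Prop :=
  tvs_topology colim_topology /\ inclusions_continuous colim_topology /\
  forall (F : topologicalLmodType K) (f : forall a, {linear E a -> F}),
    (forall a, continuous (f a)) -> compatible_family (fun a => f a) ->
    (exists g : V -> F, [/\ is_linear_map g, continuous_from colim_topology g &
                          forall a x, g (iota a x) = f a x]) /\
    (forall g1 g2 : V -> F,
        is_linear_map g1 -> continuous_from colim_topology g1 ->
        (forall a x, g1 (iota a x) = f a x) ->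
        is_linear_map g2 -> continuous_from colim_topology g2 ->
        (forall a x, g2 (iota a x) = f a x) -> g1 = g2).

(* (V, colim_topology) with the inclusions is the colimit in LCTVS_K
   (tvsType K = locally convex topological vector spaces over K) *)
Definition colimit_in_LCTVS : Prop :=
  tvs_topology colim_topology /\ locally_convex_topology colim_topology /\
  inclusions_continuous colim_topology /\
  forall (F : tvsType K) (f : forall a, {linear E a -> F}),
    (forall a, continuous (f a)) -> compatible_family (fun a => f a) ->
    (exists g : V -> F, [/\ is_linear_map g, continuous_from colim_topology g &
                          forall a x, g (iota a x) = f a x]) /\
    (forall g1 g2 : V -> F,
        is_linear_map g1 -> continuous_from colim_topology g1 ->
        (forall a x, g1 (iota a x) = f a x) ->
        is_linear_map g2 -> continuous_from colim_topology g2 ->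
        (forall a x, g2 (iota a x) = f a x) -> g1 = g2).

End Family.

Definition corollary2p12_for (K : numFieldType) : Prop :=
  forall (I : Type) (le : I -> I -> Prop)
         (E : I -> completeNormedModType K) (V : lmodType K)
         (iota : forall a, {linear E a -> V}),
    directed_preorder le -> long_index le ->
    isometric_bonding le iota -> union_covers iota ->
    [/\ ACP iota,
        banach_topology (colim_topology iota) &
        colimit_in_TVS le iota /\ colimit_in_LCTVS le iota].

From Pilot Require Import Defs.
From HB Require Import structures.
From mathcomp Require Import all_boot all_order all_algebra.
From mathcomp Require Import all_classical all_reals all_analysis.
From mathcomp Require Import complex.
From mathcomp Require Import ring.
Set Implicit Arguments. Unset Strict Implicit. Unset Printing Implicit Defensive.
Import Order.TTheory GRing.Theory Num.Theory.
Local Open Scope classical_set_scope.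
Local Open Scope ring_scope.

(* Since the bonding maps are isometries, the norms of the E_a glue to a norm
   on the union E, and compatible families of maps out of the E_a glue to maps
   on E.  Longness puts every sequence of E into a single E_b.  Hence a Cauchy
   sequence converges in that E_b, and a set U open in every E_a is norm-open:
   otherwise a sequence outside U converging to a point of U would live in one
   E_b, where U is open.  So the colimit topology is the topology of a complete
   norm, hence a locally convex vector space topology, and the universal
   properties follow by gluing. *)

Lemma archimedean_inv_lt (K : numFieldType) : Num.archimedean_axiom K ->
  forall e : K, 0 < e -> exists n : nat, n.+1%:R^-1 < e.
Proof.
move=> archK e e_gt0; have [n hn] := archK e^-1; exists n.
rewrite -[e]invrK ltf_pV2 ?posrE ?invr_gt0 ?ltr0Sn //.
by rewrite gtr0_norm ?invr_gt0 // in hn; rewrite (lt_trans hn) // ltr_nat.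
Qed.

Lemma complex_archimedean (R : rcfType) :
  Num.archimedean_axiom R -> Num.archimedean_axiom R[i].
Proof.
move=> archR z.
have [n hn] := archR (Num.sqrt (complex.Re z ^+ 2 + complex.Im z ^+ 2)).
exists n; rewrite normc_def -(rmorph_nat (real_complex R)) ltcE /= eqxx /=.
by rewrite ger0_norm ?sqrtr_ge0 in hn.
Qed.

Section NormTopology.
Variables (K : numFieldType) (V : lmodType K) (nrm : V -> K).
Hypothesis nrmP : is_norm nrm.

Let nrm_ge0 x : 0 <= nrm x. Proof. by case: nrmP. Qed.
Let nrmZ k x : nrm (k *: x) = `|k| * nrm x. Proof. by case: nrmP. Qed.
Let nrmD x y : nrm (x + y) <= nrm x + nrm y. Proof. by case: nrmP. Qed.

Lemma is_norm0 : nrm 0 = 0.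
Proof. by rewrite -(scale0r (0 : V)) nrmZ normr0 mul0r. Qed.

Lemma is_normN x : nrm (- x) = nrm x.
Proof. by rewrite -scaleN1r nrmZ normrN1 mul1r. Qed.

Lemma is_normB x y : nrm (x - y) = nrm (y - x).
Proof. by rewrite -opprB is_normN. Qed.

Definition norm_ball (x : V) (r : K) : set V := [set y | nrm (y - x) < r].

Lemma norm_ball_center x r : 0 < r -> norm_ball x r x.
Proof. by rewrite /norm_ball /= subrr is_norm0. Qed.

Lemma open_norm_ball x r : norm_topology nrm (norm_ball x r).
Proof.
move=> y /= hy; exists (r - nrm (y - x)); first by rewrite subr_gt0.
move=> z hz; rewrite /norm_ball /= -(subrK y z) -addrA.
by rewrite (le_lt_trans (nrmD _ _)) // -ltrBrDr.
Qed.

Lemma norm_topology_is_topology : is_topology (norm_topology nrm).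
Proof.
split; first by [].
split; first by move=> x _; exists 1.
split=> [U W hU hW x [Ux Wx]|F hF x [U FU Ux]].
  have [e1 e1_gt0 h1] := hU x Ux; have [e2 e2_gt0 h2] := hW x Wx.
  have [e12|e21] := real_leP (gtr0_real e1_gt0) (gtr0_real e2_gt0).
    by exists e1 => // y y1; split; [exact: h1|exact/h2/(lt_le_trans y1)].
  by exists e2 => // y y2; split; [exact/h1/(lt_trans y2)|exact: h2].
have [e e_gt0 h] := hF U FU x Ux.
by exists e => // y hy; exists U => //; apply: h.
Qed.

Lemma norm_topology_add_continuous : Defs.add_continuous (norm_topology nrm).
Proof.
move=> U x y hU Uxy; have [e e_gt0 h] := hU _ Uxy.
have e2_gt0 : 0 < e / 2 by rewrite divr_gt0.
exists (norm_ball x (e / 2)), (norm_ball y (e / 2)).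
split; try exact: open_norm_ball; try exact: norm_ball_center.
move=> a b ha hb; apply: h; rewrite opprD addrACA.
by rewrite (le_lt_trans (nrmD _ _)) // [e]splitr ltrD.
Qed.

Lemma norm_topology_opp_continuous : Defs.opp_continuous (norm_topology nrm).
Proof.
move=> U hU x /= Ux; have [e e_gt0 h] := hU _ Ux.
by exists e => // y hy /=; apply: h; rewrite -opprD is_normN.
Qed.

Lemma nrm_scale_sub k k' x y :
  nrm (k' *: y - k *: x) <= `|k'| * nrm (y - x) + `|k' - k| * nrm x.
Proof.
have -> : k' *: y - k *: x = k' *: (y - x) + (k' - k) *: x.
  by rewrite scalerBr scalerBl addrA subrK.
by rewrite -!nrmZ nrmD.
Qed.

Lemma norm_topology_scale_continuous :
  Defs.scale_continuous (norm_topology nrm).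
Proof.
move=> U k x hU Ukx; have [e e_gt0 h] := hU _ Ukx.
pose M := nrm x + 1; have M_gt0 : 0 < M by rewrite ltr_wpDl.
pose d := e / (2 * M); have d_gt0 : 0 < d by rewrite divr_gt0 ?mulr_gt0.
pose L := `|k| + d; have L_gt0 : 0 < L by rewrite ltr_wpDl.
pose r := e / (2 * L); have r_gt0 : 0 < r by rewrite divr_gt0 ?mulr_gt0.
exists d; split => //; exists (norm_ball x r).
split; [exact: open_norm_ball | exact: norm_ball_center |].
move=> k' y hk hy; apply: h; apply: le_lt_trans (nrm_scale_sub _ _ _ _) _.
have k'_le : `|k'| <= L.
  by rewrite -[k'](subrK k) (le_trans (ler_normD _ _)) // addrC lerD2l ltW.
rewrite [e]splitr ltrD //.
  apply: le_lt_trans (ler_wpM2r (nrm_ge0 _) k'_le) _.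
  have -> : e / 2 = L * r by rewrite /r; field; rewrite lt0r_neq0.
  by rewrite ltr_pM2l.
apply: le_lt_trans (ler_wpM2r (nrm_ge0 _) (ltW hk)) _.
have -> : e / 2 = d * M by rewrite /d; field; rewrite lt0r_neq0.
by rewrite ltr_pM2l // ltrDl.
Qed.

Lemma convex_norm_ball x r : convex_subset (norm_ball x r).
Proof.
move=> a b t ha hb /andP[t_ge0 t_le1]; rewrite /norm_ball /=.
have -> : t *: a + (1 - t) *: b - x = t *: (a - x) + (1 - t) *: (b - x).
  rewrite {1}[x](_ : x = t *: x + (1 - t) *: x); last first.
    by rewrite -scalerDl addrC subrK scale1r.
  by rewrite !scalerBr opprD addrACA.
apply: le_lt_trans (nrmD _ _) _.
rewrite !nrmZ ger0_norm // ger0_norm ?subr_ge0 //.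
have [->|t_neq1] := eqVneq t 1; first by rewrite subrr mul0r addr0 mul1r.
have t_lt1 : 0 < 1 - t by rewrite subr_gt0 lt_neqAle t_neq1.
have -> : r = t * r + (1 - t) * r by rewrite -mulrDl addrC subrK mul1r.
by apply: ler_ltD; [rewrite ler_wpM2l // ltW | rewrite ltr_pM2l].
Qed.

Lemma norm_topology_locally_convex : locally_convex_topology (norm_topology nrm).
Proof.
move=> U x hU Ux; have [e e_gt0 h] := hU _ Ux.
exists (norm_ball x e); split; [exact: open_norm_ball|exact: norm_ball_center|
  exact: h|exact: convex_norm_ball].
Qed.

Lemma group_topology_norm : group_topology (norm_topology nrm).
Proof.
split; first exact: norm_topology_is_topology.
split; [exact: norm_topology_add_continuous|exact: norm_topology_opp_continuous].
Qed.

Lemma tvs_topology_norm : tvs_topology (norm_topology nrm).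
Proof.
split; first exact: norm_topology_is_topology.
split; first exact: norm_topology_add_continuous.
exact: norm_topology_scale_continuous.
Qed.

End NormTopology.

Section Colimit.
Variables (K : numFieldType) (I : Type) (le : I -> I -> Prop).
Variables (E : I -> completeNormedModType K) (V : lmodType K).
Variable iota : forall a, {linear E a -> V}.
Hypothesis le_directed : forall a b, exists c, le a c /\ le b c.
Hypothesis iota_bonding :
  forall a b, le a b -> forall x : E a, exists y : E b, iota b y = iota a x.
Hypothesis iota_covers : union_covers iota.

Lemma union_covers_tagged v : exists p : {a : I & E a}, iota _ (tagged p) = v.
Proof. by have [a [x <-]] := iota_covers v; exists (Tagged E x). Qed.

Definition colim_rep (v : V) : {a : I & E a} :=
  projT1 (cid (union_covers_tagged v)).

Lemma colim_repK v : iota _ (tagged (colim_rep v)) = v.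
Proof. exact: projT2 (cid (union_covers_tagged v)). Qed.

Definition glue (F : Type) (f : forall a, E a -> F) (v : V) : F :=
  f _ (tagged (colim_rep v)).

Lemma glue_iota (F : Type) (f : forall a, E a -> F) a (x : E a) :
  compatible_family le iota f -> glue f (iota a x) = f a x.
Proof.
rewrite /glue => f_compat; set p := colim_rep _.
have [c [ac pc]] := le_directed a (tag p); have [z z_x] := iota_bonding ac x.
rewrite (f_compat _ _ x z ac (esym z_x)); apply: f_compat pc _.
by rewrite colim_repK z_x.
Qed.

Lemma common_index2 v w : exists c (x y : E c), iota c x = v /\ iota c y = w.
Proof.
have [a [x <-]] := iota_covers v; have [b [y <-]] := iota_covers w.
have [c [ac bc]] := le_directed a b.
have [x' <-] := iota_bonding ac x; have [y' <-] := iota_bonding bc y.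
by exists c, x', y'.
Qed.

Lemma glue_linear (F : lmodType K) (f : forall a, {linear E a -> F}) :
  compatible_family le iota (fun a => f a) -> is_linear_map (glue (fun a => f a)).
Proof.
move=> f_compat k v w; have [c [x [y [<- <-]]]] := common_index2 v w.
by rewrite -linearP !glue_iota // linearP.
Qed.

Lemma continuous_glue (F : topologicalType) (f : forall a, E a -> F) :
  (forall a, continuous (f a)) -> compatible_family le iota f ->
  continuous_from (colim_topology iota) (glue f).
Proof.
move=> f_cont f_compat W W_open a.
have -> : iota a @^-1` (glue f @^-1` W) = f a @^-1` W.
  by apply/seteqP; split=> x /=; rewrite glue_iota.
exact: (iffLR (continuousP _) (f_cont a)).
Qed.

Lemma eq_on_union (F : Type) (g1 g2 : V -> F) :
  (forall a x, g1 (iota a x) = g2 (iota a x)) -> g1 = g2.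
Proof. by move=> g12; apply: funext => v; have [a [x <-]] := iota_covers v. Qed.

Lemma colimit_universal (F : topologicalLmodType K)
    (f : forall a, {linear E a -> F}) :
  (forall a, continuous (f a)) -> compatible_family le iota (fun a => f a) ->
  (exists g : V -> F,
     [/\ is_linear_map g, continuous_from (colim_topology iota) g &
          forall a x, g (iota a x) = f a x]) /\
  (forall g1 g2 : V -> F,
      is_linear_map g1 -> continuous_from (colim_topology iota) g1 ->
      (forall a x, g1 (iota a x) = f a x) ->
      is_linear_map g2 -> continuous_from (colim_topology iota) g2 ->
      (forall a x, g2 (iota a x) = f a x) -> g1 = g2).
Proof.
move=> f_cont f_compat; split.
  exists (glue (fun a => f a)); split; first exact: glue_linear.
    exact: continuous_glue.
  by move=> a x; rewrite glue_iota.
by move=> g1 g2 _ _ g1f _ _ g2f; apply: eq_on_union => a x; rewrite g1f g2f.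
Qed.

Hypothesis le_long : long_index le.

Lemma sequence_in_one_space (u : nat -> V) :
  exists b, forall n, exists x : E b, iota b x = u n.
Proof.
pose A := range (fun n => tag (colim_rep (u n))).
have A_countable : countable A.
  exact: sub_countable (card_image_le _ _) (countableP _).
have [b Ab] := le_long A_countable; exists b => n.
have [y yu] := iota_bonding (Ab _ (ex_intro2 _ _ n Logic.I erefl))
  (tagged (colim_rep (u n))).
by exists y; rewrite yu colim_repK.
Qed.

Hypothesis iota_isometric : forall a b, le a b -> forall (x : E a) (y : E b),
  iota a x = iota b y -> `|x| = `|y|.

Definition colim_norm : V -> K := glue (fun a (x : E a) => `|x|).

Lemma colim_normE a (x : E a) : colim_norm (iota a x) = `|x|.
Proof.
by rewrite /colim_norm glue_iota // => b c y z bc; apply: iota_isometric.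
Qed.

Lemma is_norm_colim_norm : is_norm colim_norm.
Proof.
split=> [v|v|k v|v w].
- exact: normr_ge0.
- have [a [x <-]] := iota_covers v.
  by rewrite colim_normE => /normr0_eq0 ->; rewrite linear0.
- by have [a [x <-]] := iota_covers v; rewrite -linearZ !colim_normE normrZ.
- have [c [x [y [<- <-]]]] := common_index2 v w.
  by rewrite -linearD !colim_normE ler_normD.
Qed.

Lemma colim_norm_complete : norm_complete colim_norm.
Proof.
move=> u u_cauchy; have [b hb] := sequence_in_one_space u.
have [x xu] := choice hb.
have x_cauchy : cauchy (x @ \oo).
  apply: cauchy_exP => e e_gt0; have [N hN] := u_cauchy e e_gt0.
  exists (x N), N => // n /= Nn.
  by rewrite -ball_normE /= -colim_normE linearB !xu; apply: hN.
have [l x_l] := iffLR (cvg_ex _) (cauchy_cvg _ x_cauchy).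
exists (iota b l) => e e_gt0.
have [N _ hN] := iffLR (cvgrPdist_lt _ _) x_l e e_gt0.
by exists N => n Nn; rewrite -xu -linearB colim_normE distrC; apply: hN.
Qed.

Lemma norm_open_colim_open U :
  norm_topology colim_norm U -> colim_topology iota U.
Proof.
move=> U_open a; rewrite openE => x Ux; apply/nbhs_ballP.
have [e e_gt0 h] := U_open _ Ux; exists e => // y.
by rewrite -ball_normE /= => xy; apply: h; rewrite -linearB colim_normE distrC.
Qed.

(* So that the balls of radius 1/(n+1) form a neighbourhood base. *)
Hypothesis K_archimedean : Num.archimedean_axiom K.

Lemma colim_open_norm_open U :
  colim_topology iota U -> norm_topology colim_norm U.
Proof.
move=> U_open v Uv; apply: contrapT => not_nbhs.
have near_v_outside n : exists z, colim_norm (z - v) < n.+1%:R^-1 /\ ~ U z.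
  apply: contrapT => hn; apply: not_nbhs.
  exists n.+1%:R^-1; first by rewrite invr_gt0 ltr0Sn.
  by move=> z hz; apply: contrapT => Uz; apply: hn; exists z.
have [y hy] := choice near_v_outside.
pose w n := if n is m.+1 then y m else v.
have [b hb] := sequence_in_one_space w; have [xv xv_v] := hb 0%N.
have := U_open b; rewrite openE => /(_ xv); rewrite /= xv_v => /(_ Uv).
move=> /nbhs_ballP[e e_gt0 he].
have [n ne] := archimedean_inv_lt K_archimedean e_gt0.
have [xn /= xn_y] := hb n.+1; have [yn_v not_Uyn] := hy n.
apply: not_Uyn; rewrite -xn_y; apply: (he xn).
rewrite -ball_normE /= -colim_normE linearB xn_y xv_v is_normB.
  exact: lt_trans yn_v ne.
exact: is_norm_colim_norm.
Qed.

Lemma norm_topology_colim_norm : norm_topology colim_norm = colim_topology iota.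
Proof.
apply/seteqP; split=> U; first exact: norm_open_colim_open.
exact: colim_open_norm_open.
Qed.

End Colimit.

Lemma corollary2p12_archimedean (K : numFieldType) :
  Num.archimedean_axiom K -> corollary2p12_for K.
Proof.
move=> K_arch I le E V iota [_ [_ le_dir]] le_long [_ [bond iso]] covers.
have nrmP := is_norm_colim_norm le_dir bond covers iso.
have norm_colim := norm_topology_colim_norm le_dir bond covers le_long iso K_arch.
have incl : inclusions_continuous iota (colim_topology iota) by move=> a U /(_ a).
have univ := colimit_universal le_dir bond covers.
have tvs : tvs_topology (colim_topology iota).
  by rewrite -norm_colim; apply: tvs_topology_norm.
have lc : locally_convex_topology (colim_topology iota).
  by rewrite -norm_colim; apply: norm_topology_locally_convex.
split.
- split=> //; first by rewrite -norm_colim; apply: group_topology_norm.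
  by move=> sigma _ sigma_incl U sigmaU a; apply: sigma_incl.
- by exists (colim_norm covers); split=> //; apply: colim_norm_complete.
- by split; do 3?split=> //; move=> F; apply: univ.
Qed.

Theorem corollary2p12 (R : realType) :
  corollary2p12_for (R : numFieldType) /\ corollary2p12_for (R[i] : numFieldType).
Proof.
have R_arch : Num.archimedean_axiom R.
  by move=> x; exists (Num.Def.archi_bound `|x|); apply: archi_boundP.
by split; apply: corollary2p12_archimedean; last apply: complex_archimedean.
Qed.
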